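(* Let $n$ be an even integer and let $x$ be an integer with $6 \leq x \leq n-4$. Let $d$ be the sequence of length $n$ $$d = (n-1,\, n-1,\, n-1,\, \underbrace{x, \ldots, x}_{n-6},\, 3,\, 3,\, 3).$$ Then $d$ is a $3$-factorable graphic sequence, and no realization of $d$ has a connected $3$-factor.
   Context: A finite sequence of nonnegative integers $d = (d_1, \ldots, d_n)$ is graphic if there is a simple graph on vertices $v_1, \ldots, v_n$ with $\deg(v_i) = d_i$ for all $i$; such a graph is a realization of $d$. A $k$-factor of a graph $G$ is a spanning subgraph of $G$ in which every vertex has degree $k$. A graphic sequence $d$ is $k$-factorable if some realization of $d$ contains a $k$-factor. A connected $k$-factor is a $k$-factor that is a connected graph. *)

From mathcomp Require Import all_boot.
Set Implicit Arguments. Unset Strict Implicit. Unset Printing Implicit Defensive.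

Definition simple_graph (n : nat) (e : rel 'I_n) : Prop :=
  irreflexive e /\ symmetric e.

Definition deg (n : nat) (e : rel 'I_n) (v : 'I_n) : nat := #|[set u | e v u]|.

Definition realization (n : nat) (d : 'I_n -> nat) (e : rel 'I_n) : Prop :=
  simple_graph e /\ forall v, deg e v = d v.

Definition graphic (n : nat) (d : 'I_n -> nat) : Prop :=
  exists e, realization d e.

Definition k_factor (n k : nat) (G F : rel 'I_n) : Prop :=
  simple_graph F /\ subrel F G /\ forall v, deg F v = k.

Definition k_factorable (n k : nat) (d : 'I_n -> nat) : Prop :=
  exists G, realization d G /\ exists F, k_factor k G F.

Definition connected_graph (n : nat) (F : rel 'I_n) : Prop :=
  forall u v, connect F u v.

Definition dseq (n x : nat) (i : 'I_n) : nat :=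
  if i < 3 then n - 1 else if i < n - 3 then x else 3.
Arguments dseq : clear implicits.

From mathcomp Require Import all_boot zify ssralg zmodp.
Set Implicit Arguments.
Unset Strict Implicit.
Unset Printing Implicit Defensive.
Import GRing.Theory.

(* Call the three vertices of degree n - 1 hubs and the three of degree 3 lows.
   The hubs are adjacent to every vertex, so each low sees exactly the hubs; in a
   3-factor the lows keep all their hub edges, which uses up the degree of every
   hub, so hubs and lows span a K_{3,3} component and the middle vertices are cut
   off from it.
   For the realization, split the n - 6 = 2p middle vertices into two copies of
   Z_p, each carrying the empty graph, the complete graph or a cycle, and join
   a in the first copy to b in the second when b - a < t (mod p).  This gives an
   (x - 3)-regular middle graph containing a 3-regular one; adding the hubs
   (adjacent to everything) and the lows (adjacent to the hubs) realizes d, and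
   the 3-regular middle graph together with the K_{3,3} is a 3-factor. *)

Definition simple_rel (T : finType) (e : rel T) : Prop := irreflexive e /\ symmetric e.

Definition regular (T : finType) (e : rel T) (k : nat) : Prop :=
  forall v, #|[set u | e v u]| = k.

Definition regular_with_factor (T : finType) (d k : nat) : Prop :=
  exists E F : rel T, [/\ simple_rel E, simple_rel F, subrel F E, regular E d & regular F k].

Lemma card_set_sum (A B : finType) (P : pred (A + B)) :
  #|[set z | P z]| = #|[set a | P (inl a)]| + #|[set b | P (inr b)]|.
Proof. by rewrite -!sum1dep_card big_sumType. Qed.

Lemma card_ord_lt n k : k <= n -> #|[set i : 'I_n | i < k]| = k.
Proof.
by move=> le_kn; rewrite -sum1dep_card -(big_ord_widen _ (fun=> 1)) // sum1_card card_ord.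
Qed.

Lemma card_ord_ge n k : k <= n -> #|[set i : 'I_n | n - k <= i]| = k.
Proof.
move=> le_kn; have := cardsC [set i : 'I_n | i < n - k].
rewrite card_ord_lt ?leq_subr // card_ord.
have -> : ~: [set i : 'I_n | i < n - k] = [set i : 'I_n | n - k <= i].
  by apply/setP => i; rewrite !inE -leqNgt.
lia.
Qed.

Section NoConnectedFactor.
Variables (n x : nat) (G F : rel 'I_n).
Hypothesis n_ge7 : 7 <= n.
Hypothesis realG : realization (dseq n x) G.
Hypothesis factorF : k_factor 3 G F.

Let hubs := [set u : 'I_n | u < 3].
Let lows := [set u : 'I_n | n - 3 <= u].

Let card_hubs : #|hubs| = 3. Proof. by rewrite card_ord_lt //; lia. Qed.
Let card_lows : #|lows| = 3. Proof. by rewrite card_ord_ge //; lia. Qed.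

Lemma hub_adjacent h u : h \in hubs -> u != h -> G h u.
Proof.
case: realG => [[irrG _] degG]; rewrite inE => h3 uh.
have nbhd_h : [set u | G h u] = [set~ h].
  apply/eqP; rewrite eqEcard; apply/andP; split.
    by apply/subsetP => w; rewrite !inE; apply: contraTneq => ->; rewrite irrG.
  by rewrite cardsC1 card_ord; have := degG h; rewrite /deg /dseq h3 => ->; lia.
by move/setP/(_ u): nbhd_h; rewrite !inE uh.
Qed.

Lemma low_nbhd l : l \in lows -> [set u | G l u] = hubs.
Proof.
case: realG => [[_ symG] degG] l_low.
apply/eqP; rewrite eq_sym eqEcard; apply/andP; split.
  apply/subsetP => h h_hub; rewrite inE symG hub_adjacent //.
  by apply: contraTneq l_low => ->; rewrite !inE in h_hub *; lia.
rewrite card_hubs; have := degG l; rewrite /deg /dseq => ->.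
by rewrite inE in l_low; rewrite !ifN //; lia.
Qed.

Lemma low_factor_nbhd l : l \in lows -> [set u | F l u] = hubs.
Proof.
case: factorF => [_ [subFG degF]] l_low.
apply/eqP; rewrite eqEcard; apply/andP; split.
  by apply/subsetP => u; rewrite -(low_nbhd l_low) !inE; apply: subFG.
by rewrite card_hubs -[X in X <= _](degF l).
Qed.

Lemma hub_factor_nbhd h : h \in hubs -> [set u | F h u] = lows.
Proof.
case: factorF => [[_ symF] [_ degF]] h_hub.
apply/eqP; rewrite eq_sym eqEcard; apply/andP; split.
  apply/subsetP => l l_low; rewrite inE symF.
  by move: h_hub; rewrite -(low_factor_nbhd l_low) inE.
by rewrite card_lows -[X in _ <= X](degF h).
Qed.

Lemma no_connected_factor : ~ connected_graph F.
Proof.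
case: factorF => [[_ symF] _] connF.
have closed_ends : closed F (hubs :|: lows).
  apply: (intro_closed (sym_connect_sym symF)) => u v Fuv.
  rewrite !in_setU => /orP[u_hub | u_low]; apply/orP.
    by right; rewrite -(hub_factor_nbhd u_hub) inE.
  by left; rewrite -(low_factor_nbhd u_low) inE.
have lt0n : 0 < n by lia.
have lt3n : 3 < n by lia.
have := closed_connect closed_ends (connF (Ordinal lt0n) (Ordinal lt3n)).
by rewrite !inE /=; lia.
Qed.

End NoConnectedFactor.

Section Layered.
Variable p' : nat.
Local Notation p := p'.+1.

Lemma card_diff_lt_r (a : 'I_p) t : t <= p -> #|[set b : 'I_p | val (b - a)%R < t]| = t.
Proof.
move=> le_tp; rewrite -[RHS](card_ord_lt le_tp) -[RHS](card_preimset _ (subIr a)).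
by apply: eq_card => b; rewrite !inE.
Qed.

Lemma card_diff_lt_l (b : 'I_p) t : t <= p -> #|[set a : 'I_p | val (b - a)%R < t]| = t.
Proof.
move=> le_tp; rewrite -[RHS](card_ord_lt le_tp) -[RHS](card_preimset _ (@subrI _ b)).
by apply: eq_card => a; rewrite !inE.
Qed.

Definition layered (R : rel 'I_p) (t : nat) : rel ('I_p + 'I_p) := fun y z =>
  match y, z with
  | inl a, inl b | inr a, inr b => R a b
  | inl a, inr b | inr b, inl a => val (b - a)%R < t
  end.

Lemma layered_simple R t : simple_rel R -> simple_rel (layered R t).
Proof. by case=> irrR symR; split=> [[a|a] | [a|a] [b|b]] /=. Qed.

Lemma layered_regular R t k : regular R k -> t <= p -> regular (layered R t) (k + t).
Proof.
move=> regR le_tp [a|b]; rewrite card_set_sum /= regR.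
  by rewrite card_diff_lt_r.
by rewrite card_diff_lt_l // addnC.
Qed.

Lemma layered_subrel R R' t t' : subrel R' R -> t' <= t -> subrel (layered R' t') (layered R t).
Proof.
move=> subR le_t [a|a] [b|b] /= => [/subR // | lt_t' | lt_t' | /subR //];
  exact: leq_trans lt_t' le_t.
Qed.

Lemma layered_with_factor k kF t tF :
  regular_with_factor 'I_p k kF -> tF <= t <= p ->
  regular_with_factor ('I_p + 'I_p)%type (k + t) (kF + tF).
Proof.
case=> R [RF [simR simRF subR regR regRF]] /andP[le_t le_tp].
exists (layered R t), (layered RF tF); split.
- exact: layered_simple.
- exact: layered_simple.
- exact: layered_subrel.
- exact: layered_regular.
- exact: layered_regular (leq_trans le_t le_tp).
Qed.

End Layered.

Lemma empty_regular_with_factor (T : finType) : regular_with_factor T 0 0.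
Proof. by exists (fun _ _ => false), (fun _ _ => false); split=> // a; rewrite cards0. Qed.

Lemma neq_simple (T : finType) : simple_rel (fun a b : T => a != b).
Proof. by split=> [a | a b]; rewrite ?eqxx // eq_sym. Qed.

Lemma neq_regular n : regular (fun a b : 'I_n => a != b) n.-1.
Proof.
by move=> a; rewrite -[n in n.-1]card_ord -(cardsC1 a); apply: eq_card => b; rewrite !inE eq_sym.
Qed.

Lemma complete_regular_with_factor n : regular_with_factor 'I_n n.-1 n.-1.
Proof.
exists (fun a b => a != b), (fun a b => a != b).
by split=> //; [exact: neq_simple | exact: neq_simple | exact: neq_regular | exact: neq_regular].
Qed.

Section Cycle.
Variable q : nat.
Local Notation p := q.+3.

Definition cycle_rel : rel 'I_p := fun a b => (b == a + 1)%R || (a == b + 1)%R.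

Lemma cycle_simple : simple_rel cycle_rel.
Proof.
split=> [a | a b]; last by rewrite /cycle_rel orbC.
by rewrite /cycle_rel orbb eq_sym -subr_eq0 [(a + 1)%R]addrC addrK oner_eq0.
Qed.

Lemma cycle_regular : regular cycle_rel 2.
Proof.
move=> a; have -> : [set b | cycle_rel a b] = [set a + 1; a - 1]%R.
  by apply/setP => b; rewrite !inE /cycle_rel [(b == a - 1)%R]eq_sym subr_eq.
rewrite cards2 (inj_eq (addrI a)) -addr_eq0.
suff -> : (1 + 1 != 0 :> 'I_p)%R by [].
by apply/eqP => /(congr1 val) /=; rewrite !modn_small.
Qed.

Lemma complete_cycle_regular_with_factor : regular_with_factor 'I_p p.-1 2.
Proof.
exists (fun a b => a != b), cycle_rel; split.
- exact: neq_simple.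
- exact: cycle_simple.
- by case: cycle_simple => irr_cycle _ a b; apply: contraTneq => ->; rewrite irr_cycle.
- exact: neq_regular.
- exact: cycle_regular.
Qed.

End Cycle.

Lemma two_layer_regular_with_factor q d :
  3 <= d < (q.+2).*2 -> regular_with_factor ('I_q.+2 + 'I_q.+2)%type d 3.
Proof.
case/andP=> d_ge3 d_lt; have [le_dp | lt_pd] := leqP d q.+2.
  by apply: (layered_with_factor (empty_regular_with_factor _)); rewrite d_ge3.
case: q => [|q] in d_lt lt_pd *.
  have -> : d = 1 + 2 by lia.
  exact: (layered_with_factor (complete_regular_with_factor 2)).
have -> : d = q.+2 + (d - q.+2) by lia.
apply: (layered_with_factor (complete_cycle_regular_with_factor q)); lia.
Qed.

Lemma relpre_simple (T T' : finType) (f : T -> T') (e : rel T') :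
  simple_rel e -> simple_rel (relpre f e).
Proof. by case=> irr_e sym_e; split=> [u | u v]; [apply: irr_e | apply: sym_e]. Qed.

Lemma card_relpre_nbhd (T T' : finType) (f : T -> T') (e : rel T') u :
  bijective f -> #|[set v | relpre f e u v]| = #|[set z | e (f u) z]|.
Proof.
move=> bij_f; rewrite -(on_card_preimset (onW_bij _ bij_f)).
by apply: eq_card => v; rewrite !inE.
Qed.

Section Frame.
Variable M : finType.
Local Notation V := ('I_3 + (M + 'I_3))%type.
Local Notation N := (3 + (#|M| + 3)).

Definition frame (full : bool) (E : rel M) : rel V := fun y z =>
  match y, z with
  | inl i, inl j => full && (i != j)
  | inl _, inr (inl _) | inr (inl _), inl _ => full
  | inl _, inr (inr _) | inr (inr _), inl _ => true
  | inr (inl a), inr (inl b) => E a b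
  | _, _ => false
  end.

Lemma frame_simple full E : simple_rel E -> simple_rel (frame full E).
Proof.
case=> irrE symE.
by split=> [[i|[a|l]] | [i|[a|l]] [j|[b|l']]] //=; rewrite ?eqxx ?andbF // eq_sym.
Qed.

Lemma frame_subrel E EF : subrel EF E -> subrel (frame false EF) (frame true E).
Proof. by move=> subE [i|[a|l]] [j|[b|l']] //=; apply: subE. Qed.

Lemma card_frame_hub full E i :
  #|[set z | frame full E (inl i) z]| = (if full then 2 + #|M| else 0) + 3.
Proof.
rewrite !card_set_sum /=; case: full; rewrite /= ?cardsT ?cards0 ?card_ord //.
by rewrite (neq_regular i) addnA.
Qed.

Lemma card_frame_mid full E a :
  #|[set z | frame full E (inr (inl a)) z]| = (if full then 3 else 0) + #|[set b | E a b]|.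
Proof.
by rewrite !card_set_sum /=; case: full; rewrite /= ?cardsT ?cards0 ?card_ord ?addn0.
Qed.

Lemma card_frame_low full E l : #|[set z | frame full E (inr (inr l)) z]| = 3.
Proof. by rewrite !card_set_sum /= cardsT !cards0 card_ord. Qed.

Definition frame_index (u : 'I_N) : V :=
  match split u with
  | inl h => inl h
  | inr r => inr (match split r with inl m => inl (enum_val m) | inr l => inr l end)
  end.

Definition frame_rank (v : V) : 'I_N :=
  unsplit (match v with
    | inl h => inl h
    | inr w => inr (unsplit (match w with inl a => inl (enum_rank a) | inr l => inr l end))
    end).

Lemma frame_indexK : cancel frame_index frame_rank.
Proof.
move=> u; rewrite /frame_index /frame_rank.
case: (split u) (splitK u) => [h|r] <- //=; congr (unsplit (inr _)).
by case: (split r) (splitK r) => [m|l] <- //=; rewrite enum_valK.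
Qed.

Lemma frame_rankK : cancel frame_rank frame_index.
Proof.
case=> [h|[a|l]]; rewrite /frame_index /frame_rank unsplitK //; cbv iota.
  by rewrite unsplitK enum_rankK.
by rewrite unsplitK.
Qed.

Lemma dseq_frame_index x u : dseq N x u =
  match frame_index u with inl _ => N - 1 | inr (inl _) => x | inr (inr _) => 3 end.
Proof.
rewrite /frame_index /dseq; case: splitP => [h _ // | r ->].
case: splitP => [[m lt_m] -> | l ->] /=.
  (* [set] merges two elaborations of #|M| that [lia] would see as distinct atoms. *)
  by rewrite ifT //; move: lt_m; set k := #|M|; lia.
by rewrite ifF //; lia.
Qed.

Lemma frame_k_factorable d :
  regular_with_factor M d 3 -> k_factorable 3 (dseq N (d + 3)).
Proof.
case=> E [EF [simE simEF subE regE regEF]].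
have bij_index : bijective frame_index := Bijective frame_indexK frame_rankK.
exists (relpre frame_index (frame true E)); split.
  split=> [|u]; first exact: relpre_simple (frame_simple _ simE).
  rewrite /deg card_relpre_nbhd // dseq_frame_index.
  case: (frame_index u) => [i|[a|l]]; rewrite ?card_frame_hub ?card_frame_mid ?card_frame_low //.
  by rewrite regE addnC.
exists (relpre frame_index (frame false EF)); split; last split.
- exact: relpre_simple (frame_simple _ simEF).
- by move=> u v; apply: frame_subrel.
- move=> u; rewrite /deg card_relpre_nbhd //.
  case: (frame_index u) => [i|[a|l]];
    by rewrite ?card_frame_hub ?card_frame_mid ?regEF ?card_frame_low.
Qed.

End Frame.

Theorem claim1 (n x : nat) :
  ~~ odd n -> 6 <= x -> x <= n - 4 ->
  graphic (dseq n x) /\ k_factorable 3 (dseq n x) /\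
  (forall G : rel 'I_n, realization (dseq n x) G ->
     forall F : rel 'I_n, k_factor 3 G F -> ~ connected_graph F).
Proof.
move=> even_n x_ge6 x_le.
have factorable : k_factorable 3 (dseq n x).
  pose q := n./2 - 5.
  have n_eq : n = 3 + (#|{: 'I_q.+2 + 'I_q.+2}| + 3).
    rewrite card_sum card_ord; move: (odd_double_half n); rewrite (negbTE even_n) /q; lia.
  have x_eq : x = (x - 3) + 3 by lia.
  rewrite n_eq x_eq; apply: frame_k_factorable; apply: two_layer_regular_with_factor; lia.
split; first by case: factorable => G [realG _]; exists G.
split=> // G realG F factorF; apply: no_connected_factor realG factorF; lia.
Qed.
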